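(* Let $f:[0,1]\to\mathbb{R}$ be continuous on $[0,1]$ and twice differentiable on $(0,1)$, and define $g(t)=f(\tfrac12+t)$ for $t\in[-\tfrac12,\tfrac12]$. Assume: (1) $g^{(2)}(t)>0$ for $-\tfrac12<t<0$, and $g^{(2)}(0)\ge 0$; (2) $g^{(2)}(t)\ge -g^{(2)}(-t)$ for $0<t<\tfrac12$; (3) $\lim_{t\to-1/2}\frac{1}{g^{(2)}(t)}=0$; (4) the function $t\mapsto \frac{1}{g^{(2)}(t)}$ is convex on $[-\tfrac12,0)$ (its value at $-\tfrac12$ being the limit $0$ from (3)). Then $f$ is simplex-convex.
   Context: A function $f:[0,1]\to\mathbb{R}$ is called simplex-convex if for every $n\ge 1$ the function $(p_1,\dots,p_n)\mapsto f(p_1)+\dots+f(p_n)$ is convex on the simplex $\mathrm{Sim}_n(1)=\{(p_1,\dots,p_n): p_i\ge 0,\ \sum_i p_i=1\}$. *)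

From HB Require Import structures.
From mathcomp Require Import all_boot all_order all_algebra.
From mathcomp Require Import all_classical all_reals all_analysis.
Set Implicit Arguments. Unset Strict Implicit. Unset Printing Implicit Defensive.
Import Order.TTheory GRing.Theory Num.Theory.
Import numFieldNormedType.Exports.
Local Open Scope classical_set_scope.
Local Open Scope ring_scope.

Definition convex_on (R : realType) (I : set R) (h : R -> R) : Prop :=
  forall x y (l : R), I x -> I y -> 0 <= l <= 1 ->
    h (l * x + (1 - l) * y) <= l * h x + (1 - l) * h y.

Definition simplex (R : realType) (n : nat) (p : 'I_n -> R) : Prop :=
  (forall i, 0 <= p i) /\ \sum_(i < n) p i = 1.

Definition simplex_convex (R : realType) (f : R -> R) : Prop :=
  forall n : nat, (0 < n)%N ->
  forall (p q : 'I_n -> R) (l : R), simplex p -> simplex q -> 0 <= l <= 1 ->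
    \sum_(i < n) f (l * p i + (1 - l) * q i)
      <= l * (\sum_(i < n) f (p i)) + (1 - l) * (\sum_(i < n) f (q i)).

(* Along a segment [s |-> p + s (q - p)] of the simplex, the second derivative of
   [\sum_i f (p_i + s v_i)] is the quadratic form [\sum_i f''(x_i) v_i^2] with [\sum_i v_i = 0],
   so it suffices to show that this form is nonnegative.  By (1), (2) and [g''(0) >= 0], only a
   coordinate [x_k > 1/2] can carry a negative weight, and then every other coordinate with
   [v_i <> 0] lies in [(0, B]], [B = 1 - x_k < 1/2], where [f'' > 0].  Since [1/f''] is convex on
   [[0, 1/2)] and vanishes at [0], [1/f''(x) <= (x/B) (1/f''(B))], hence
   [\sum_{i <> k} 1/f''(x_i) <= 1/f''(B) <= 1/(-f''(x_k))] using (2) at [x_k].  Cauchy--Schwarz,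
   [v_k^2 = (\sum_{i <> k} v_i)^2 <= (\sum_{i <> k} f''(x_i) v_i^2) (\sum_{i <> k} 1/f''(x_i))],
   then absorbs the negative term [f''(x_k) v_k^2]. *)

From HB Require Import structures.
From mathcomp Require Import all_boot all_order all_algebra.
From mathcomp Require Import ring lra.
From mathcomp Require Import all_classical all_reals all_analysis.
Import Order.TTheory GRing.Theory Num.Theory.
Import numFieldNormedType.Exports.
Local Open Scope classical_set_scope.
Local Open Scope ring_scope.

Section quadratic_form.
Context {R : realType}.

Lemma tangent_le_wsqr (w a mu : R) : 0 < w -> 2 * a * mu - mu ^+ 2 / w <= w * a ^+ 2.
Proof.
move=> w_gt0; rewrite -subr_ge0.
have -> : w * a ^+ 2 - (2 * a * mu - mu ^+ 2 / w) = (w * a - mu) ^+ 2 / w.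
  by field; rewrite gt_eqF.
by rewrite divr_ge0 ?sqr_ge0 ?ltW.
Qed.

(* Cauchy--Schwarz [(\sum a)^2 <= (\sum w a^2) (\sum 1/w)], linearized so that no division by
   [\sum 1/w] is needed. *)
Lemma sum_wsqr_ge (I : finType) (P : pred I) (w a : I -> R) (mu : R) :
  (forall i, P i -> 0 < w i) ->
  2 * (\sum_(i | P i) a i) * mu - mu ^+ 2 * \sum_(i | P i) (w i)^-1
    <= \sum_(i | P i) w i * a i ^+ 2.
Proof.
move=> w_gt0; rewrite !mulr_sumr mulr_suml -sumrB.
by apply: ler_sum => i Pi; exact: tangent_le_wsqr (w_gt0 i Pi).
Qed.

Context {c : R -> R}.
Hypothesis c_gt0 : forall y, 0 < y < 2^-1 -> 0 < c y.
Hypothesis c_half_ge0 : 0 <= c 2^-1.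
Hypothesis c_ge_reflect : forall y, 2^-1 < y < 1 -> - c (1 - y) <= c y.
Hypothesis invc_le : forall y B, 0 < y <= B -> B < 2^-1 -> (c y)^-1 <= y / B * (c B)^-1.

Lemma sum_invc_le (I : finType) (P : pred I) (x : I -> R) (B : R) :
  0 < B < 2^-1 -> (forall i, P i -> 0 < x i <= B) -> \sum_(i | P i) x i <= B ->
  \sum_(i | P i) (c (x i))^-1 <= (c B)^-1.
Proof.
move=> /andP[B_gt0 B_lt] x_in sum_x_le.
apply: le_trans (_ : \sum_(i | P i) x i / B * (c B)^-1 <= _).
  by apply: ler_sum => i Pi; apply: invc_le => //; exact: x_in.
rewrite -mulr_suml -mulr_suml -[leRHS]mul1r ler_wpM2r //.
  by rewrite invr_ge0 ltW // c_gt0 // B_gt0.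
by rewrite ler_pdivrMr // mul1r.
Qed.

Lemma quadratic_form_heavy_ge0 (I : finType) (x v : I -> R) (k : I) :
  (forall i, 0 <= x i) -> \sum_i x i = 1 -> \sum_(i | v i != 0) v i = 0 ->
  (forall i, v i != 0 -> 0 < x i < 1) -> v k != 0 -> 2^-1 < x k ->
  0 <= \sum_(i | v i != 0) c (x i) * v i ^+ 2.
Proof.
move=> x_ge0 sum_x sum_v x_in vk_neq0 xk_gt.
have /andP[xk_gt0 xk_lt1] := x_in k vk_neq0.
pose P i := (v i != 0) && (i != k).
pose B := 1 - x k.
have B_in : 0 < B < 2^-1 by apply/andP; split; rewrite /B; lra.
have sum_xP : \sum_(i | P i) x i <= B.
  rewrite /B -sum_x [X in _ <= X - _](bigD1 k) //= addrAC subrr add0r big_mkcondl.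
  by apply: ler_sum => i _; case: ifP.
have xP i : P i -> 0 < x i <= B.
  move=> Pi; have /andP[vi_neq0 _] := Pi.
  have /andP[-> _] := x_in i vi_neq0; apply: le_trans sum_xP.
  by rewrite (bigD1 i) //= lerDl; apply: sumr_ge0.
have cP i : P i -> 0 < c (x i).
  move=> /xP /andP[xi_gt0 xi_le]; apply: c_gt0; rewrite xi_gt0 /=.
  by apply: le_lt_trans xi_le _; case/andP: B_in.
have sum_vP : \sum_(i | P i) v i = - v k.
  by apply/eqP; rewrite -addr_eq0 addrC -(bigD1 k) //=; apply/eqP.
have W_le : \sum_(i | P i) (c (x i))^-1 <= (c B)^-1 by exact: sum_invc_le.
rewrite (bigD1 k) //=; have [ck_ge0|ck_lt0] := leP 0 (c (x k)).
  rewrite addr_ge0 //; first by rewrite mulr_ge0 // sqr_ge0.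
  by apply: sumr_ge0 => i /cP/ltW c_ge0; rewrite mulr_ge0 // sqr_ge0.
set lam := - c (x k).
have lam_gt0 : 0 < lam by rewrite oppr_gt0.
have lam_le : lam <= c B by rewrite lerNl; apply: c_ge_reflect; rewrite xk_gt.
have lamW_le1 : lam * \sum_(i | P i) (c (x i))^-1 <= 1.
  apply: le_trans (_ : c B * (c B)^-1 <= 1).
    apply: ler_pM => //; first exact: ltW.
    by apply: sumr_ge0 => i /cP/ltW; rewrite invr_ge0.
  by rewrite mulfV ?gt_eqF ?(lt_le_trans lam_gt0).
(* With [mu = lam * (- v k)] the bound reads [Q >= lam v_k^2 (2 - lam W)], and [lam W <= 1]. *)
have := sum_wsqr_ge _ P (fun i => c (x i)) v (lam * - v k) cP; rewrite sum_vP.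
set W := \sum_(i | P i) _; set Q := \sum_(i | P i) _ => Q_ge.
have : 0 <= lam * v k ^+ 2 * (1 - lam * W).
  by rewrite mulr_ge0 ?subr_ge0 // mulr_ge0 ?sqr_ge0 // ltW.
rewrite -[c (x k)]opprK -/lam; nra.
Qed.

Lemma quadratic_form_ge0 (I : finType) (x v : I -> R) :
  (forall i, 0 <= x i) -> \sum_i x i = 1 -> \sum_i v i = 0 ->
  (forall i, v i != 0 -> 0 < x i < 1) ->
  0 <= \sum_i c (x i) * v i ^+ 2.
Proof.
move=> x_ge0 sum_x sum_v x_in.
have -> : \sum_i c (x i) * v i ^+ 2 = \sum_(i | v i != 0) c (x i) * v i ^+ 2.
  by symmetry; apply: big_rmcond => i; rewrite negbK => /eqP ->; rewrite expr0n mulr0.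
have [[k /andP[vk_neq0 xk_gt]]|light] := pselect (exists k, (v k != 0) && (2^-1 < x k)).
  apply: (quadratic_form_heavy_ge0 _ _ _ k) => //.
  by rewrite -[RHS]sum_v; apply: big_rmcond => i; rewrite negbK => /eqP.
apply: sumr_ge0 => i vi_neq0; rewrite mulr_ge0 ?sqr_ge0 //.
have xi_le : x i <= 2^-1.
  by rewrite leNgt; apply/negP => xi_gt; apply: light; exists i; rewrite vi_neq0.
move: xi_le; rewrite le_eqVlt => /predU1P[-> //|xi_lt]; apply/ltW/c_gt0.
by rewrite xi_lt andbT; case/andP: (x_in i vi_neq0).
Qed.

End quadratic_form.

Lemma within_continuous_comp_maps {T U V : topologicalType} (A : set T) (B : set U)
    (a : T -> U) (g : U -> V) :
  {within B, continuous g} -> continuous a -> (forall x, A x -> B (a x)) ->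
  {within A, continuous (g \o a)}.
Proof.
move=> /subspace_continuousP g_cont a_cont aAB; apply/subspace_continuousP => x Ax.
apply: cvg_comp (g_cont (a x) (aAB x Ax)) => P /= BP.
have aBP : \forall z \near x, B (a z) -> P (a z) := a_cont x _ BP.
by apply: filterS aBP => z BPz Az; exact: BPz (aAB z Az).
Qed.

Section real_line.
Context {R : realType}.

Lemma derive1_shift (F : R -> R) (c : R) :
  derive1 (fun t => F (c + t)) = fun t => derive1 F (c + t).
Proof.
apply/funext => t; rewrite /derive1.
by under eq_fun do rewrite addrCA.
Qed.

Lemma is_derive_affine (p v s : R) : is_derive s 1 (fun s => p + s * v) v.
Proof. by apply: is_derive_eq; rewrite add0r mul1r scaler0 add0r [_%:A]mulr1. Qed.

Lemma is_derive_comp_affine (F : R -> R) (p v s : R) :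
  v = 0 \/ derivable F (p + s * v) 1 ->
  is_derive s 1 (fun s => F (p + s * v)) ('D_1 F (p + s * v) * v).
Proof.
case=> [->|F_derivable].
  rewrite mulr0; under eq_fun do rewrite mulr0 addr0; exact: is_derive_cst.
exact: (@is_derive1_comp _ F (fun s => p + s * v) s _ _
  (derivableP F_derivable) (is_derive_affine p v s)).
Qed.

Lemma line_itvcc (a b s : R) :
  0 <= a <= 1 -> 0 <= b <= 1 -> 0 <= s <= 1 -> 0 <= a + s * (b - a) <= 1.
Proof.
by move=> /andP[a_ge0 a_le1] /andP[b_ge0 b_le1] /andP[s_ge0 s_le1]; apply/andP; split; nra.
Qed.

Lemma line_itvoo (a b s : R) :
  0 <= a <= 1 -> 0 <= b <= 1 -> 0 < s < 1 -> b - a != 0 -> 0 < a + s * (b - a) < 1.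
Proof.
move=> /andP[a_ge0 a_le1] /andP[b_ge0 b_le1] /andP[s_gt0 s_lt1]; rewrite subr_eq0.
by case: (ltgtP a b) => // ab _; apply/andP; split; nra.
Qed.

Lemma is_derive_sum_fun (n : nat) (h : 'I_n -> R -> R) (dh : 'I_n -> R) (s : R) :
  (forall i, is_derive s 1 (h i) (dh i)) ->
  is_derive s 1 (fun s => \sum_(i < n) h i s) (\sum_(i < n) dh i).
Proof.
move=> h_derive; have -> : (fun s => \sum_(i < n) h i s) = \sum_(i < n) h i.
  by apply/funext => t; rewrite fct_sumE.
exact: is_derive_sum.
Qed.

End real_line.

Section sum_along_segment.
Context {R : realType}.
Context {f : R -> R} {n : nat} {p v : 'I_n -> R}.
Hypothesis f_cont : {within `[0, 1], continuous f}.
Hypothesis f_derivable2 : forall x, 0 < x < 1 -> derivable f x 1 /\ derivable ('D_1 f) x 1.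
Hypothesis segment_in : forall i s, 0 <= s <= 1 -> 0 <= p i + s * v i <= 1.
Hypothesis segment_inside : forall i s, 0 < s < 1 -> v i != 0 -> 0 < p i + s * v i < 1.

Let phi s := \sum_(i < n) f (p i + s * v i).
Let dphi s := \sum_(i < n) 'D_1 f (p i + s * v i) * v i.
Let d2phi s := \sum_(i < n) 'D_1 ('D_1 f) (p i + s * v i) * v i ^+ 2.

Let derivable_at_segment (F : R -> R) : (forall x, 0 < x < 1 -> derivable F x 1) ->
  forall i s, 0 < s < 1 -> v i = 0 \/ derivable F (p i + s * v i) 1.
Proof.
move=> F_derivable i s s_in; have [|vi_neq0] := eqVneq (v i) 0; first by left.
by right; apply/F_derivable/segment_inside.
Qed.

Let is_derive_phi {s : R} : 0 < s < 1 -> is_derive s 1 phi (dphi s).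
Proof.
move=> s_in; apply: is_derive_sum_fun => i.
by apply/is_derive_comp_affine/derivable_at_segment => // x /f_derivable2[].
Qed.

Let is_derive_dphi {s : R} : 0 < s < 1 -> is_derive s 1 dphi (d2phi s).
Proof.
move=> s_in; apply: is_derive_sum_fun => i.
have D1f_derive : is_derive s 1 (fun s => 'D_1 f (p i + s * v i))
    ('D_1 ('D_1 f) (p i + s * v i) * v i).
  by apply/is_derive_comp_affine/derivable_at_segment => // x /f_derivable2[].
rewrite expr2 mulrA; apply: is_derive_eq.
by rewrite scaler0 add0r [_ *: _]mulrC.
Qed.

Let within_continuous_phi : {within `[0, 1], continuous phi}.
Proof.
have -> : phi = \sum_(i < n) (fun s => f (p i + s * v i)).
  by apply/funext => s; rewrite fct_sumE.
apply: (big_ind (fun F : R -> R => {within `[0, 1], continuous F})) => //.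
- by move=> x; exact: cvg_cst.
- by move=> F G; exact: within_continuousD.
move=> i _; rewrite -[X in {within _, continuous X}]/(f \o fun s => p i + s * v i).
apply: within_continuous_comp_maps => //.
  move=> s; apply/differentiable_continuous/derivable1_diffP.
  by case: (is_derive_affine (p i) (v i) s).
by move=> s; rewrite /= !in_itv /=; exact: segment_in.
Qed.

Lemma sum_along_segment_convex : (forall s, 0 < s < 1 -> 0 <= d2phi s) ->
  forall l, 0 <= l <= 1 -> phi (1 - l) <= l * phi 0 + (1 - l) * phi 1.
Proof.
move=> d2phi_ge0 l /andP[l_ge0 l_le1].
have dphiE (s : R) : 0 < s < 1 -> {near s, dphi =1 'D_1 phi}.
  move=> s_in; have : s \in `]0, 1[ by rewrite in_itv.
  move/near_in_itvoo; apply: filterS => t; rewrite in_itv /= => t_in.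
  by case: (is_derive_phi t_in).
have phi_derivable : {in `]0, 1[, forall s, derivable phi s 1}.
  by move=> s; rewrite in_itv => /is_derive_phi[].
have Dphi_derivable : {in `]0, 1[, forall s, derivable ('D_1 phi) s 1}.
  move=> s; rewrite in_itv => s_in; apply: (near_eq_derivable (dphiE s s_in)).
  by case: (is_derive_dphi s_in).
have D2phi_ge0 (s : R) : 0 < s < 1 -> 0 <= 'D_1 ('D_1 phi) s.
  move=> s_in; rewrite -(near_eq_derive _ (dphiE s s_in)).
  by case: (is_derive_dphi s_in) => _ ->; exact: d2phi_ge0.
have [_ cvg_right cvg_left] := (continuous_within_itvP phi ltr01).1 within_continuous_phi.
have := second_derivative_convex D2phi_ge0 cvg_left cvg_right phi_derivable Dphi_derivable
  (Itv01 l_ge0 l_le1) ler01.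
by rewrite !convRE /= /unstable.onem mulr0 add0r mulr1.
Qed.

End sum_along_segment.

Lemma simplex_itv {R : realType} {n : nat} {p : 'I_n -> R} :
  simplex p -> forall i, 0 <= p i <= 1.
Proof.
move=> [p_ge0 <-] i; rewrite p_ge0 /=.
by rewrite (bigD1 i) //= lerDl; apply: sumr_ge0.
Qed.

Lemma simplex_convex_second_derivative {R : realType} (f : R -> R) :
  {within `[0, 1], continuous f} ->
  (forall x, 0 < x < 1 -> derivable f x 1 /\ derivable ('D_1 f) x 1) ->
  (forall n (x v : 'I_n -> R), simplex x -> \sum_(i < n) v i = 0 ->
    (forall i, v i != 0 -> 0 < x i < 1) ->
    0 <= \sum_(i < n) 'D_1 ('D_1 f) (x i) * v i ^+ 2) ->
  simplex_convex f.
Proof.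
move=> f_cont f_derivable2 hessian_ge0 n _ p q l p_simplex q_simplex l_in.
have p_in := simplex_itv p_simplex; have q_in := simplex_itv q_simplex.
pose v i := q i - p i.
have segment_in i s : 0 <= s <= 1 -> 0 <= p i + s * v i <= 1 by exact: line_itvcc.
have segment_inside i s : 0 < s < 1 -> v i != 0 -> 0 < p i + s * v i < 1 by exact: line_itvoo.
have sum_v : \sum_(i < n) v i = 0.
  by rewrite sumrB (proj2 p_simplex) (proj2 q_simplex) subrr.
have d2_ge0 s : 0 < s < 1 -> 0 <= \sum_(i < n) 'D_1 ('D_1 f) (p i + s * v i) * v i ^+ 2.
  move=> s_in; apply: hessian_ge0 => //; last by move=> i; exact: segment_inside.
  have s_in' : 0 <= s <= 1 by case/andP: s_in => /ltW -> /ltW ->.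
  split=> [i|]; first by case/andP: (segment_in i s s_in').
  by rewrite big_split /= -mulr_sumr sum_v mulr0 addr0 (proj2 p_simplex).
have := sum_along_segment_convex f_cont f_derivable2 segment_in segment_inside d2_ge0 l l_in.
have -> : \sum_(i < n) f (p i + 0 * v i) = \sum_(i < n) f (p i).
  by apply: eq_bigr => i _; rewrite mul0r addr0.
have -> : \sum_(i < n) f (p i + 1 * v i) = \sum_(i < n) f (q i).
  by apply: eq_bigr => i _; rewrite mul1r addrC subrK.
suff -> : \sum_(i < n) f (p i + (1 - l) * v i) = \sum_(i < n) f (l * p i + (1 - l) * q i).
  by [].
by apply: eq_bigr => i _; congr f; rewrite /v; ring.
Qed.

Lemma derive1n2_shift {R : realType} (F : R -> R) (a t : R) :
  derive1n 2 (fun t => F (a + t)) t = 'D_1 ('D_1 F) (a + t).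
Proof.
have D1E : derive1 F = 'D_1 F by apply/funext => x; rewrite derive1E.
by rewrite /derive1n /= !derive1_shift D1E derive1E.
Qed.

Lemma convex_on_chord_le {R : realType} {h : R -> R} {a b : R} (y z : R) :
  convex_on [set t | a <= t < b] h -> h a = 0 -> a < y <= z -> z < b ->
  h y <= (y - a) / (z - a) * h z.
Proof.
move=> h_convex ha0 /andP[ay yz] zb.
have az : a < z := lt_le_trans ay yz.
have za_gt0 : 0 < z - a by rewrite subr_gt0.
have yE : (y - a) / (z - a) * z + (1 - (y - a) / (z - a)) * a = y.
  by field; rewrite gt_eqF.
have := h_convex z a ((y - a) / (z - a)); rewrite yE ha0 mulr0 addr0; apply.
- by rewrite /= zb (ltW az).
- by rewrite /= lexx (lt_trans az zb).
- by rewrite divr_ge0 ?subr_ge0 ?(ltW ay) ?(ltW az) //= ler_pdivrMr // mul1r lerD2r.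
Qed.

Lemma inv_le_of_convex_inv {R : realType} {c : R -> R} :
  convex_on [set t | - 2^-1 <= t < 0]
    (fun t => if t == - 2^-1 then 0 else (c (2^-1 + t))^-1) ->
  forall y B, 0 < y <= B -> B < 2^-1 -> (c y)^-1 <= y / B * (c B)^-1.
Proof.
move=> inv_convex y B /andP[y_gt0 yB] B_lt.
have shift_neq x : 0 < x -> (x - 2^-1 == - 2^-1) = false.
  by move=> x_gt0; apply/negbTE; rewrite -subr_eq0 opprK subrK gt_eqF.
have := convex_on_chord_le (y - 2^-1) (B - 2^-1) inv_convex.
rewrite eqxx !shift_neq ?(lt_le_trans y_gt0) // !opprK !subrK ![2^-1 + (_ - _)]addrC !subrK.
move=> /(_ erefl); apply; first (apply/andP; split).
- by rewrite -subr_gt0 opprK subrK.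
- by rewrite lerD2r.
- by rewrite subr_lt0.
Qed.

Theorem theorem5p5 (R : realType) (f : R -> R) :
  {within `[0, 1], continuous f} ->
  (forall x : R, 0 < x < 1 -> derivable f x 1 /\ derivable (derive1 f) x 1) ->
  let g := fun t : R => f (2^-1 + t) in
  (* (1) *)
  (forall t : R, - 2^-1 < t < 0 -> 0 < (derive1n 2 g) t) ->
  0 <= (derive1n 2 g) 0 ->
  (* (2) *)
  (forall t : R, 0 < t < 2^-1 -> - (derive1n 2 g) (- t) <= (derive1n 2 g) t) ->
  (* (3) *)
  (fun t => ((derive1n 2 g) t)^-1) @ at_right (- 2^-1) --> (0 : R) ->
  (* (4) *)
  convex_on [set t : R | - 2^-1 <= t < 0]
    (fun t => if t == - 2^-1 then 0 else ((derive1n 2 g) t)^-1) ->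
  simplex_convex f.
Proof.
have half_reflect (y : R) : 1 - y = 2^-1 - (y - 2^-1) by lra.
have upper_half (y : R) : 2^-1 < y < 1 -> 0 < y - 2^-1 < 2^-1 by lra.
move=> f_cont f_derivable2 g g2_gt0 g2_0_ge0 g2_reflect _ inv_g2_convex.
pose c := 'D_1 ('D_1 f).
have g2E : derive1n 2 g = fun t => c (2^-1 + t) by apply/funext => t; exact: derive1n2_shift.
rewrite g2E /= in g2_gt0 g2_0_ge0 g2_reflect inv_g2_convex.
have cE y : c y = c (2^-1 + (y - 2^-1)) by rewrite [2^-1 + _]addrC subrK.
have c_gt0 y : 0 < y < 2^-1 -> 0 < c y.
  move=> /andP[y_gt0 y_lt]; rewrite cE; apply: g2_gt0.
  by rewrite -subr_gt0 opprK subrK y_gt0 subr_lt0.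
have c_half_ge0 : 0 <= c 2^-1 by rewrite -[2^-1]addr0.
have c_reflect y : 2^-1 < y < 1 -> - c (1 - y) <= c y.
  by move=> /upper_half y_in; rewrite [c y]cE half_reflect; apply: g2_reflect.
have D1E : derive1 f = 'D_1 f by apply/funext => x; rewrite derive1E.
apply: simplex_convex_second_derivative; first exact: f_cont.
  by rewrite -D1E; exact: f_derivable2.
move=> n x v [x_ge0 sum_x] sum_v x_in.
exact: (quadratic_form_ge0 c_gt0 c_half_ge0 c_reflect (inv_le_of_convex_inv inv_g2_convex)).
Qed.
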